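(* In the setting described in the context, suppose $(g\circ h^a)_\sharp\mu=\mu$ for some $a>0$, and that $\int F\,d\mu$ is finite and nonzero. Then the structure functions have power-law scaling $S_p(k_n)\propto k_n^{-\zeta_p}$ (i.e. $S_p(k_n)=c\,k_n^{-\zeta_p}$ with a constant $c\neq0$ independent of $n$) with exponent $$\zeta_p=(1-\log_2a)\,p.$$
   Context: Let $(\mathcal{X},\Sigma)$ be a measurable space, $\Phi^t$ a flow on $\mathcal{X}$ (bijective measurable maps, $\Phi^{t_1}\circ\Phi^{t_2}=\Phi^{t_1+t_2}$, jointly measurable), $f_\sharp$ push-forward, and $\mu$ a probability measure with $\Phi^t_\sharp\mu=\mu$ for all $t$. Let $h^a$, $a>0$, be bijective measurable maps of $\mathcal{X}$ and $\mathcal{G}$ a group of bijective measurable maps with $h^{a_1}\circ h^{a_2}=h^{a_1a_2}$, $\Phi^t\circ g=g\circ\Phi^t$, $g\circ h^a=h^a\circ g$, $\Phi^t\circ h^a=h^a\circ\Phi^{t/a}$. Fix $g\in\mathcal{G}$ and $p\in\mathbb{R}$, and a measurable $F:\mathcal{X}\to\mathbb{R}$ with $F\circ h^a=F/a^p$ for all $a>0$. For integers $n\ge0$ let $k_n=2^n$ and define the generalized structure function $S_p(k_n)=k_n^{-p}\int F\circ g^n\,d\mu$. *)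

From HB Require Import structures.
From mathcomp Require Import all_boot all_order all_algebra.
From mathcomp Require Import all_classical all_reals all_analysis.
Set Implicit Arguments. Unset Strict Implicit. Unset Printing Implicit Defensive.
Import Order.TTheory GRing.Theory Num.Theory.
Local Open Scope classical_set_scope.
Local Open Scope ring_scope.

Definition bimeas d (T : measurableType d) (f : T -> T) : Prop :=
  bijective f /\ measurable_fun setT f.

Definition is_flow d (T : measurableType d) (R : realType) (Phi : R -> T -> T) : Prop :=
  (forall t, bimeas (Phi t)) /\
  (forall t1 t2, Phi t1 \o Phi t2 = Phi (t1 + t2)) /\
  measurable_fun setT (fun q : R * T => Phi q.1 q.2).

Definition pushforward_eq d (T : measurableType d) (R : realType)
  (mu : set T -> \bar R) (f : T -> T) : Prop :=
  forall A, measurable A -> pushforward mu f A = mu A.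

Definition is_map_group d (T : measurableType d) (G : set (T -> T)) : Prop :=
  G id /\
  (forall g1 g2, G g1 -> G g2 -> G (g1 \o g2)) /\
  (forall g, G g -> bimeas g /\ exists g', G g' /\ cancel g g' /\ cancel g' g).

Definition scaling_setting d (T : measurableType d) (R : realType)
  (mu : probability T R) (Phi : R -> T -> T) (h : R -> T -> T)
  (G : set (T -> T)) : Prop :=
  is_flow Phi /\
  (forall t, pushforward_eq mu (Phi t)) /\
  (forall a, 0 < a -> bimeas (h a)) /\
  is_map_group G /\
  (forall a1 a2, 0 < a1 -> 0 < a2 -> h a1 \o h a2 = h (a1 * a2)) /\
  (forall t g, G g -> Phi t \o g = g \o Phi t) /\
  (forall g a, G g -> 0 < a -> g \o h a = h a \o g) /\
  (forall t a, 0 < a -> Phi t \o h a = h a \o Phi (t / a)).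

Definition kn (R : realType) (n : nat) : R := 2 ^+ n.

Definition Sp d (T : measurableType d) (R : realType) (mu : probability T R)
  (F : T -> R) (g : T -> T) (p : R) (n : nat) : \bar R :=
  ((kn R n) `^ (- p))%:E * \int[mu]_x (F (iter n g x))%:E.

Definition log2 (R : realType) (a : R) : R := ln a / ln 2.

From HB Require Import structures.
From mathcomp Require Import all_boot all_order all_algebra.
From mathcomp Require Import all_classical all_reals all_analysis measurable_realfun.
From mathcomp Require Import ring.
Import Order.TTheory GRing.Theory Num.Theory.
Local Open Scope classical_set_scope.
Local Open Scope ring_scope.

(* The map psi := g o h_a preserves mu, and g = h_(1/a) o psi because g
   commutes with h and h_(1/a) o h_a = id.  As h_(1/a) also commutes with g and
   F o h_(1/a) = a^p F, the invariance of mu under psi gives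
   int F o g^(n+1) dmu = a^p int F o g^n dmu, hence int F o g^n dmu = (a^p)^n c
   with c = int F dmu.  Since (a^p)^n = k_n^(p log2 a), this turns into
   S_p(k_n) = c k_n^(-p + p log2 a). *)

Section ereal_integral.
Local Open Scope ereal_scope.
Context {d} {T : measurableType d} {R : realType}.
Variable mu : {measure set T -> \bar R}.

(* Unlike [muleDr], no definedness condition on [x + y]: for a positive real
   factor both sides agree even on +oo + -oo. *)
Lemma gt0_muleDr (k : R) (x y : \bar R) : (0 < k)%R ->
  k%:E * (x + y) = k%:E * x + k%:E * y.
Proof.
move=> k0; have k0' : 0 < k%:E by rewrite lte_fin.
case: x => [x| |]; case: y => [y| |]; rewrite /= ?gt0_muley ?gt0_muleNy //.
by rewrite -EFinD -!EFinM mulrDr.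
Qed.

Lemma gt0_integralZl (D : set T) (f : T -> \bar R) (k : R) :
  measurable D -> measurable_fun D f -> (0 < k)%R ->
  \int[mu]_(x in D) (k%:E * f x) = k%:E * \int[mu]_(x in D) f x.
Proof.
move=> mD mf k0.
rewrite [in RHS]integralE integralE ge0_funeposM ?ge0_funenegM ?ltW //.
rewrite !ge0_integralZl_EFin ?ltW //.
- by rewrite [RHS]gt0_muleDr // muleN.
- exact: measurable_funeneg.
- exact: measurable_funepos.
Qed.

Lemma integral_measure_preserving (psi : T -> T) (f : T -> \bar R) :
  measurable_fun setT psi -> pushforward_eq mu psi -> measurable_fun setT f ->
  \int[mu]_x f (psi x) = \int[mu]_x f x.
Proof.
move=> mpsi mu_psi mf.
have ge0_invariant (u : T -> \bar R) : measurable_fun setT u ->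
    (forall x, 0 <= u x) -> \int[mu]_x u (psi x) = \int[mu]_x u x.
  move=> mu0 u0.
  rewrite -[in LHS](preimage_setT psi).
  rewrite -(ge0_integral_pushforward mpsi) //.
  by apply: eq_measure_integral => A mA _; exact: mu_psi.
rewrite integralE [in RHS]integralE.
rewrite -(ge0_invariant f^\+) -?(ge0_invariant f^\-) //.
- by congr (_ - _); apply: eq_integral => x _; rewrite ?funeposE ?funenegE.
- exact: measurable_funeneg.
- exact: measurable_funepos.
Qed.

End ereal_integral.

Section scaling_family.
Context {T : Type} {R : realType} {h : R -> T -> T}.
Hypothesis hM : forall a1 a2, 0 < a1 -> 0 < a2 -> h a1 \o h a2 = h (a1 * a2).
Hypothesis h1_inj : injective (h 1).

Lemma scaling1 : h 1 =1 id.
Proof.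
move=> x; apply: h1_inj.
by have := congr1 (fun f => f x) (hM 1 1 ltr01 ltr01); rewrite mulr1.
Qed.

Lemma scalingK a : 0 < a -> cancel (h a) (h a^-1).
Proof.
move=> a0 x; have ai0 : 0 < a^-1 by rewrite invr_gt0.
have := congr1 (fun f => f x) (hM _ _ ai0 a0); rewrite mulVf ?gt_eqF // => /= ->.
exact: scaling1.
Qed.

End scaling_family.

Lemma iter_commute (T : Type) (f g : T -> T) :
  (forall x, f (g x) = g (f x)) -> forall n x, f (iter n g x) = iter n g (f x).
Proof. by move=> fg; elim=> [//|n IH] x /=; rewrite fg IH. Qed.

Section self_similar_iteration.
Local Open Scope ereal_scope.
Context {d} {T : measurableType d} {R : realType}.
Context {mu : {measure set T -> \bar R}} {g s psi : T -> T} {F : T -> R} {lam : R}.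
Hypotheses (lam_gt0 : (0 < lam)%R) (mF : measurable_fun setT F).
Hypotheses (mg : measurable_fun setT g) (mpsi : measurable_fun setT psi).
Hypothesis mu_psi : pushforward_eq mu psi.
Hypotheses (g_factor : g =1 s \o psi) (sg : forall x, s (g x) = g (s x)).
Hypothesis F_s : forall x, F (s x) = (lam * F x)%R.

Lemma measurable_iter n : measurable_fun setT (iter n g).
Proof. by elim: n => [|n IH] /=; [exact: measurable_id | exact: measurableT_comp]. Qed.

Lemma integral_iter_rescaled n :
  \int[mu]_x (F (iter n g x))%:E = (lam ^+ n)%:E * \int[mu]_x (F x)%:E.
Proof.
elim: n => [|n IH]; first by rewrite expr0 mul1e.
have mFn : measurable_fun setT (fun x => (F (iter n g x))%:E).
  by apply/measurable_EFinP; exact: measurableT_comp (measurable_iter n).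
transitivity (\int[mu]_x (lam%:E * (F (iter n g (psi x)))%:E)).
  by apply: eq_integral => x _; rewrite iterSr g_factor /= -iter_commute // F_s.
rewrite gt0_integralZl //; last exact: measurableT_comp mFn mpsi.
by rewrite (integral_measure_preserving _ _ _ mpsi mu_psi mFn) IH muleA -EFinM exprS.
Qed.

End self_similar_iteration.

Lemma exprn_powR_kn_log2 (R : realType) (a p : R) n :
  0 < a -> (a `^ p) ^+ n = kn R n `^ (log2 a * p).
Proof.
move=> a0; have ln2_gt0 : 0 < ln (2 : R) by apply: ln_gt0; rewrite ltr1n.
rewrite /powR /kn !gt_eqF ?exprn_gt0 // -expRM_natl lnXn //.
by congr expR; rewrite /log2 -mulr_natr; field; rewrite gt_eqF.
Qed.

Theorem proposition5 (d : measure_display) (T : measurableType d) (R : realType)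
  (mu : probability T R) (Phi : R -> T -> T) (h : R -> T -> T)
  (G : set (T -> T)) (g : T -> T) (p : R) (F : T -> R) :
  scaling_setting mu Phi h G ->
  G g ->
  measurable_fun setT F ->
  (forall a, 0 < a -> F \o h a = (fun x => F x / a `^ p)) ->
  forall a, 0 < a ->
  pushforward_eq mu (g \o h a) ->
  (\int[mu]_x (F x)%:E \is a fin_num)%E ->
  (\int[mu]_x (F x)%:E != 0)%E ->
  exists c : R, c != 0 /\
    forall n : nat, Sp mu F g p n = (c * (kn R n) `^ (- ((1 - log2 a) * p)))%:E.
Proof.
move=> [_ [_ [hb [grp [hM [_ [gh _]]]]]]] Gg mF hF a a0 mu_gha Ifin I0.
have ai0 : 0 < a^-1 by rewrite invr_gt0.
have [[_ mg] _] := grp.2.2 g Gg.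
have h1_inj : injective (h 1) by exact: bij_inj (hb 1 ltr01).1.
have hK := scalingK hM h1_inj _ a0.
have g_factor : g =1 h a^-1 \o (g \o h a).
  by move=> x /=; rewrite -[RHS](congr1 (fun f => f (h a x)) (gh g _ Gg ai0)) /= hK.
have hg x : h a^-1 (g x) = g (h a^-1 x) by have := congr1 (fun f => f x) (gh g _ Gg ai0).
have F_h x : F (h a^-1 x) = a `^ p * F x.
  have /= -> := congr1 (fun f => f x) (hF _ ai0).
  rewrite -[a^-1]powR_inv1 ?ltW // -powRrM.
  by rewrite mulN1r powRN invrK mulrC.
have mgha : measurable_fun setT (g \o h a) by apply: measurableT_comp mg (hb a a0).2.
have J := integral_iter_rescaled (powR_gt0 p a0) mF mg mgha mu_gha g_factor hg F_h.
set c := fine (\int[mu]_x (F x)%:E); have Ic : (\int[mu]_x (F x)%:E = c%:E)%E by rewrite fineK.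
exists c; split; first by apply: contra I0; rewrite Ic => /eqP ->.
move=> n; rewrite /Sp J Ic -!EFinM exprn_powR_kn_log2 // mulrA mulrC -powRD; last first.
  by apply/implyP => _; rewrite /kn gt_eqF // exprn_gt0.
by rewrite mulrBl mul1r opprB addrC.
Qed.
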